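(* Let $(S,\mathcal{E})$ be a qualitative evidence frame. Define $i,u,d:2^{\mathcal{E}}\to\tau_{\mathcal{E}}$ by $i(\emptyset)=u(\emptyset)=d(\emptyset)=S$ and, for nonempty $\mathbf{E}\subseteq\mathcal{E}$: $i(\mathbf{E})=\bigcap\mathbf{E}$, $u(\mathbf{E})=\bigcup\mathbf{E}$, and $d(\mathbf{E})$ is the least (w.r.t. inclusion) element of $\tau_{\mathbf{E}}$ that is dense in $\bigcup\mathbf{E}$ w.r.t. $\tau_{\mathbf{E}}$ (such a least element exists). Then $\{i,u,d\}$ is a set of evidence allocation functions on $(S,\mathcal{E})$.
   Context: A qualitative evidence frame is a pair $(S,\mathcal{E})$ where $S$ is a finite nonempty set and $\mathcal{E}$ is a nonempty family of subsets of $S$ with $\emptyset\notin\mathcal{E}$ and $S\notin\mathcal{E}$. For any family $\mathbf{E}\subseteq 2^S$, $\tau_{\mathbf{E}}$ denotes the topology on $S$ generated by $\mathbf{E}$ (as a subbasis): it consists of $\emptyset$, $S$, all finite intersections of members of $\mathbf{E}$, and all arbitrary unions of such finite intersections. For $\mathbf{E}\subseteq\mathcal{E}$, an element $D\in\tau_{\mathbf{E}}$ is called dense in $\bigcup\mathbf{E}$ w.r.t. $\tau_{\mathbf{E}}$ if $D\cap T\neq\emptyset$ for every nonempty $T\in\tau_{\mathbf{E}}$. A set of evidence allocation functions on $(S,\mathcal{E})$ is a set $\mathfrak{F}$ of functions $2^{\mathcal{E}}\to\tau_{\mathcal{E}}$ such that for all $f,g\in\mathfrak{F}$: (1) $f(\emptyset)=S$;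 (2) for every nonempty $\mathbf{E}\subseteq\mathcal{E}$, either $f(\mathbf{E})=\emptyset$, or $f(\mathbf{E})\in\tau_{\mathbf{E}}$ and $f(\mathbf{E})$ is dense in $\bigcup\mathbf{E}$ w.r.t. $\tau_{\mathbf{E}}$; (3) for every $\mathbf{E}\subseteq\mathcal{E}$, $f(\mathbf{E})\subseteq g(\mathbf{E})$ or $g(\mathbf{E})\subseteq f(\mathbf{E})$. *)

From mathcomp Require Import all_boot.
Set Implicit Arguments. Unset Strict Implicit. Unset Printing Implicit Defensive.

Section EvidenceFrames.
Variable S : finType.

Definition fin_inters (F : {set {set S}}) : {set {set S}} :=
  [set \bigcap_(X in G) X | G : {set {set S}} in powerset F].

(* A \in tau_F: A is a union of finite intersections of members of F
   (the empty union gives set0, the empty intersection gives setT). *)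
Definition open_in (F : {set {set S}}) (A : {set S}) : bool :=
  [exists B : {set {set S}}, (B \subset fin_inters F) && (A == \bigcup_(X in B) X)].

(* D is dense (in \bigcup F) w.r.t. tau_F. *)
Definition dense_in (F : {set {set S}}) (D : {set S}) : bool :=
  [forall T : {set S}, (open_in F T && (T != set0)) ==> (D :&: T != set0)].

Definition open_dense (F : {set {set S}}) (D : {set S}) : bool :=
  open_in F D && dense_in F D.

Definition least_open_dense (F : {set {set S}}) (D : {set S}) : bool :=
  open_dense F D && [forall D' : {set S}, open_dense F D' ==> (D \subset D')].

Definition evidence_frame (E : {set {set S}}) : Prop :=
  [set: S] != set0 /\ E != set0 /\ set0 \notin E /\ [set: S] \notin E.

Definition evidence_allocation_set (E : {set {set S}})
    (Fs : ({set {set S}} -> {set S}) -> Prop) : Prop :=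
  forall f g, Fs f -> Fs g ->
    (forall EE : {set {set S}}, EE \subset E -> open_in E (f EE)) /\
    f set0 = [set: S] /\
    (forall EE : {set {set S}}, EE \subset E -> EE != set0 ->
        f EE = set0 \/ (open_in EE (f EE) /\ dense_in EE (f EE))) /\
    (forall EE : {set {set S}}, EE \subset E -> (f EE \subset g EE) \/ (g EE \subset f EE)).

Definition alloc_i (EE : {set {set S}}) : {set S} :=
  if EE == set0 then [set: S] else \bigcap_(X in EE) X.

Definition alloc_u (EE : {set {set S}}) : {set S} :=
  if EE == set0 then [set: S] else \bigcup_(X in EE) X.

(* The least open dense set (its existence is part of the main statement);
   set0 is only a default when no such set exists. *)
Definition alloc_d (EE : {set {set S}}) : {set S} :=
  if EE == set0 then [set: S]
  else odflt set0 [pick D | least_open_dense EE D].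

End EvidenceFrames.

From mathcomp Require Import all_boot.
Set Implicit Arguments. Unset Strict Implicit. Unset Printing Implicit Defensive.

(* The three maps are nested.  For nonempty EE, the intersection of EE lies in
   every nonempty open set of tau_EE, and the union of EE is open and, when
   nonempty, dense.  Open dense sets are closed under intersection and there
   are finitely many, so their intersection is the least open dense set d(EE),
   and it lies between the intersection and the union.  Hence
   i(EE) <= d(EE) <= u(EE), which gives the comparability axiom; the other
   axioms hold for each map separately. *)

Section GeneratedTopology.
Variable S : finType.
Implicit Types (E F : {set {set S}}) (A B D T : {set S}).

Lemma fin_intersP F A :
  reflect (exists2 G : {set {set S}}, G \subset F & A = \bigcap_(X in G) X) (A \in fin_inters F).
Proof.
apply: (iffP imsetP) => [[G]|[G]]; rewrite ?powersetE => ? ?; exists G => //.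
by rewrite powersetE.
Qed.

Lemma open_inP F A :
  reflect (exists2 B : {set {set S}}, B \subset fin_inters F & A = \bigcup_(X in B) X) (open_in F A).
Proof.
apply: (iffP existsP) => [[B /andP [sB /eqP ->]]|[B sB ->]]; exists B => //.
by rewrite sB eqxx.
Qed.

Lemma open_in0 F : open_in F set0.
Proof. by apply/open_inP; exists set0; rewrite ?sub0set ?big_set0. Qed.

Lemma open_inT F : open_in F [set: S].
Proof.
apply/open_inP; exists [set [set: S]]; last by rewrite big_set1.
by rewrite sub1set; apply/fin_intersP; exists set0; rewrite ?sub0set ?big_set0.
Qed.

Lemma open_inI F A B : open_in F A -> open_in F B -> open_in F (A :&: B).
Proof.
move=> /open_inP [BA sA ->] /open_inP [BB sB ->].
apply/open_inP; exists [set X :&: Y | X in BA, Y in BB].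
  apply/subsetP => _ /imset2P [X Y XA YB ->].
  have /fin_intersP [G1 sG1 ->] := subsetP sA _ XA.
  have /fin_intersP [G2 sG2 ->] := subsetP sB _ YB.
  by apply/fin_intersP; exists (G1 :|: G2); rewrite ?subUset ?sG1 ?bigcap_setU.
apply/setP => x; rewrite inE; apply/andP/bigcupP.
  case=> /bigcupP [X XA xX] /bigcupP [Y YB xY]; exists (X :&: Y).
    by apply/imset2P; exists X Y.
  by rewrite inE xX.
case=> _ /imset2P [X Y XA YB ->]; rewrite inE => /andP [xX xY].
by split; apply/bigcupP; [exists X | exists Y].
Qed.

Lemma open_inS F E A : F \subset E -> open_in F A -> open_in E A.
Proof.
move=> sFE /open_inP [B sB ->]; apply/open_inP; exists B => //.
apply/subsetP => _ /(subsetP sB) /fin_intersP [G sG ->].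
by apply/fin_intersP; exists G => //; apply: subset_trans sFE.
Qed.

Lemma open_in_bigcap F : open_in F (\bigcap_(X in F) X).
Proof.
apply/open_inP; exists [set \bigcap_(X in F) X]; last by rewrite big_set1.
by rewrite sub1set; apply/fin_intersP; exists F.
Qed.

Lemma open_in_bigcup F : open_in F (\bigcup_(X in F) X).
Proof.
apply/open_inP; exists F => //; apply/subsetP => X XF.
by apply/fin_intersP; exists [set X]; rewrite ?sub1set ?big_set1.
Qed.

Lemma bigcap_sub_open F T :
  open_in F T -> T != set0 -> \bigcap_(X in F) X \subset T.
Proof.
move=> /open_inP [B sB ->] /set0Pn [x /bigcupP [Y YB _]].
have /fin_intersP [G sG eY] := subsetP sB _ YB.
apply/subsetP => z /bigcapP zF; apply/bigcupP; exists Y => //.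
by rewrite eY; apply/bigcapP => X /(subsetP sG); apply: zF.
Qed.

Lemma dense_in_bigcap F :
  \bigcap_(X in F) X != set0 -> dense_in F (\bigcap_(X in F) X).
Proof.
move=> ne; apply/forallP => T; apply/implyP => /andP [oT nT].
by rewrite (setIidPl (bigcap_sub_open oT nT)).
Qed.

Lemma dense_in_bigcup F :
  \bigcup_(X in F) X != set0 -> dense_in F (\bigcup_(X in F) X).
Proof.
move=> /set0Pn [y yU]; apply/forallP => T; apply/implyP.
case/andP=> /open_inP [B sB ->] /set0Pn [x /bigcupP [Y YB xY]].
have /fin_intersP [G sG eY] := subsetP sB _ YB.
apply/set0Pn; have [G0|/set0Pn [Z ZG]] := eqVneq G set0.
  exists y; rewrite inE yU; apply/bigcupP; exists Y => //.
  by rewrite eY G0 big_set0 inE.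
exists x; rewrite inE; apply/andP; split; last by apply/bigcupP; exists Y.
apply/bigcupP; exists Z; first exact: (subsetP sG).
by move: xY; rewrite eY => /bigcapP; apply.
Qed.

Lemma open_denseT F : open_dense F [set: S].
Proof.
rewrite /open_dense open_inT; apply/forallP => T.
by apply/implyP => /andP [_]; rewrite setTI.
Qed.

Lemma open_denseI F A B :
  open_dense F A -> open_dense F B -> open_dense F (A :&: B).
Proof.
move=> /andP [oA dA] /andP [oB dB]; rewrite /open_dense open_inI //=.
apply/forallP => T; apply/implyP => /andP [oT nT].
have nAT : A :&: T != set0 by move/forallP: dA => /(_ T); rewrite oT nT.
move/forallP: dB => /(_ (A :&: T)); rewrite open_inI // nAT /=.
by rewrite setIA (setIC B).
Qed.

Lemma bigcap_sub_open_dense F D :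
  open_dense F D -> \bigcap_(X in F) X \subset D.
Proof.
case/andP=> oD dD; have [D0|nD] := eqVneq D set0; last exact: bigcap_sub_open.
(* an empty dense set forces S to be empty *)
move/forallP: dD => /(_ [set: S]); rewrite open_inT D0 set0I eqxx implybF.
by rewrite negbK => /eqP <-; rewrite subsetT.
Qed.

Lemma least_open_dense_exists F : exists D, least_open_dense F D.
Proof.
exists (\bigcap_(D | open_dense F D) D); apply/andP; split.
  by apply: (big_ind (open_dense F)); [exact: open_denseT | exact: open_denseI |].
by apply/forallP => D; apply/implyP => oD; apply/subsetP => x /bigcapP; apply.
Qed.

End GeneratedTopology.

Section Allocations.
Variable S : finType.
Implicit Types (E EE : {set {set S}}) (f : {set {set S}} -> {set S}).

Definition allocation_map E f : Prop :=
  (forall EE, EE \subset E -> open_in E (f EE)) /\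
  f set0 = [set: S] /\
  (forall EE, EE \subset E -> EE != set0 ->
     f EE = set0 \/ (open_in EE (f EE) /\ dense_in EE (f EE))).

Lemma allocation_mapP E f :
  f set0 = [set: S] ->
  (forall EE, EE != set0 -> f EE = set0 \/ open_dense EE (f EE)) ->
  allocation_map E f.
Proof.
move=> fT f_od; split; last split=> // EE sEE nEE.
  move=> EE sEE; have [-> | nEE] := eqVneq EE set0; first by rewrite fT open_inT.
  case: (f_od EE nEE) => [-> | /andP [oEE _]]; first exact: open_in0.
  exact: open_inS oEE.
by case: (f_od EE nEE) => [|/andP]; [left | right].
Qed.

Lemma alloc_dP EE : EE != set0 -> least_open_dense EE (alloc_d EE).
Proof.
rewrite /alloc_d => /negbTE ->; case: pickP => [D //|noD].
by have [D] := least_open_dense_exists EE; rewrite noD.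
Qed.

Lemma alloc_i_map E : allocation_map E (@alloc_i S).
Proof.
apply: allocation_mapP => [|EE /negbTE nEE]; rewrite /alloc_i ?eqxx // nEE.
have [-> | nI] := eqVneq (\bigcap_(X in EE) X) set0; [left | right] => //.
by rewrite /open_dense open_in_bigcap dense_in_bigcap.
Qed.

Lemma alloc_u_map E : allocation_map E (@alloc_u S).
Proof.
apply: allocation_mapP => [|EE /negbTE nEE]; rewrite /alloc_u ?eqxx // nEE.
have [-> | nU] := eqVneq (\bigcup_(X in EE) X) set0; [left | right] => //.
by rewrite /open_dense open_in_bigcup dense_in_bigcup.
Qed.

Lemma alloc_d_map E : allocation_map E (@alloc_d S).
Proof.
apply: allocation_mapP => [|EE nEE]; first by rewrite /alloc_d eqxx.
by right; case/andP: (alloc_dP nEE).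
Qed.

Lemma alloc_i_sub_d EE : alloc_i EE \subset alloc_d EE.
Proof.
rewrite /alloc_i; have [-> | nEE] := eqVneq EE set0; first by rewrite /alloc_d eqxx.
by case/andP: (alloc_dP nEE) => /bigcap_sub_open_dense.
Qed.

Lemma alloc_d_sub_u EE : set0 \notin EE -> alloc_d EE \subset alloc_u EE.
Proof.
move=> EE0; rewrite /alloc_u; have [-> | nEE] := eqVneq EE set0.
  by rewrite /alloc_d eqxx.
case/andP: (alloc_dP nEE) => _ /forallP /(_ (\bigcup_(X in EE) X)) /implyP.
apply; rewrite /open_dense open_in_bigcup dense_in_bigcup //.
have /set0Pn [X XEE] := nEE; have /set0Pn [x xX] : X != set0.
  by apply: contraNneq EE0 => <-.
by apply/set0Pn; exists x; apply/bigcupP; exists X.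
Qed.

End Allocations.

Theorem corollary2 (S : finType) (E : {set {set S}}) :
  evidence_frame E ->
  (forall EE : {set {set S}}, EE \subset E -> EE != set0 ->
     exists D : {set S}, least_open_dense EE D) /\
  evidence_allocation_set E
    (fun f => f = @alloc_i S \/ f = @alloc_u S \/ f = @alloc_d S).
Proof.
move=> [_ [_ [E0 _]]]; split=> [EE _ _ | f g f_iud g_iud].
  exact: least_open_dense_exists.
have [f_open [fT f_dense]] : allocation_map E f.
  by case: f_iud => [|[|]] ->; [apply: alloc_i_map | apply: alloc_u_map | apply: alloc_d_map].
do 3!split=> //; move=> EE sEE.
have sid := alloc_i_sub_d EE.
have sdu : alloc_d EE \subset alloc_u EE.
  by apply: alloc_d_sub_u; apply: contra E0 => /(subsetP sEE).
have siu := subset_trans sid sdu.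
by case: f_iud g_iud => [|[|]] -> [|[|]] ->; by [left | right].
Qed.
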